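(* For every finite graph $G$ with maximum degree $\Delta\ge 1$, $\chi_s(G)\le 2\sqrt{2}\,\Delta^{3/2}+\Delta$.
   Context: A star coloring of a graph is a proper vertex-coloring in which every path on four vertices contains at least three colors (equivalently, any two color classes induce a forest of stars). The star chromatic number $\chi_s(G)$ is the minimum number of colors in a star coloring of $G$. *)

From mathcomp Require Import all_boot all_order all_algebra.
Set Implicit Arguments. Unset Strict Implicit. Unset Printing Implicit Defensive.

Definition simple_graph (T : finType) (e : rel T) : Prop :=
  symmetric e /\ irreflexive e.

Definition deg (T : finType) (e : rel T) (x : T) : nat := #|[set y | e x y]|.

Definition max_degree (T : finType) (e : rel T) : nat := \max_(x : T) deg e x.

Definition proper_coloring (T : finType) (e : rel T) k (f : T -> 'I_k) : bool :=
  [forall x, forall y, e x y ==> (f x != f y)].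

Definition star_coloring (T : finType) (e : rel T) k (f : T -> 'I_k) : bool :=
  proper_coloring e f &&
  [forall a, forall b, forall c, forall d,
     (uniq [:: a; b; c; d] && [&& e a b, e b c & e c d]) ==>
     (3 <= size (undup [:: f a; f b; f c; f d]))].

Definition star_colorable (T : finType) (e : rel T) (k : nat) : bool :=
  [exists f : {ffun T -> 'I_k}, star_coloring e f].

Lemma star_colorable_card (T : finType) (e : rel T) :
  irreflexive e -> exists k, star_colorable e k.
Proof.
move=> irr; exists #|T|; apply/existsP; exists [ffun x => enum_rank x].
apply/andP; split.
  apply/forallP => x; apply/forallP => y; apply/implyP => exy.
  rewrite !ffunE; apply/negP => /eqP /enum_rank_inj exy'.
  by move: exy; rewrite exy' irr.
apply/forallP => a; apply/forallP => b; apply/forallP => c; apply/forallP => d.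
apply/implyP => /andP [u _]; rewrite !ffunE.
have -> : undup [:: enum_rank a; enum_rank b; enum_rank c; enum_rank d] =
          [:: enum_rank a; enum_rank b; enum_rank c; enum_rank d].
  apply/undup_id.
  by rewrite (map_inj_uniq (f := enum_rank) enum_rank_inj
        [:: a; b; c; d]) in u * ; move: u; rewrite /= .
by [].
Qed.

Lemma star_colorable_ex (T : finType) (e : rel T) :
  exists k, star_colorable e k || [exists x, e x x].
Proof.
case: (boolP [exists x, e x x]) => [h|h]; first by exists 0; apply/orP; right.
have irr : irreflexive e by move=> x; apply/negP => exx; move/existsP: h; apply; exists x.
by have [k hk] := star_colorable_card irr; exists k; rewrite hk.
Qed.

(* star chromatic number chi_s: least k admitting a star coloring with
   k colors (for a relation with a loop, which is not a simple graph,
   the value is meaningless / 0) *)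
Definition star_chromatic (T : finType) (e : rel T) : nat :=
  ex_minn (star_colorable_ex e).

From mathcomp Require Import all_boot all_order all_algebra.
From mathcomp Require Import zify ring lra.
Import Order.TTheory GRing.Theory Num.Theory.
Set Implicit Arguments. Unset Strict Implicit. Unset Printing Implicit Defensive.

(* Counting argument in the style of Rosenfeld.  Let D be the maximum degree
   and C(S) the number of partial star colorings with k colors whose set of
   colored vertices is S.
   We show b C(S - v) <= C(S) for every v in S, by induction on |S|: of the
   k C(S - v) ways to give v a color, at most D C(S - v) create a monochromatic
   edge, and each bicolored path on four vertices through v is pinned down by
   a 3-step walk from v (at most 2 D (D-1)^2 walks) and a coloring of S - v - a
   for a neighbour a of v, hence accounts for at most C(S - v - a) <= C(S - v)/b
   failures.  So C(V) > 0 as soon as b^2 + b D + 2 D (D-1)^2 <= b k, and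
   b = sqrt 2 D^(3/2) makes this hold for k = floor(2 sqrt 2 D^(3/2) + D). *)

Lemma undup4_ge3 (X : eqType) (x1 x2 x3 x4 : X) :
  x1 != x2 -> x2 != x3 -> x3 != x4 -> ~~ ((x1 == x3) && (x2 == x4)) ->
  3 <= size (undup [:: x1; x2; x3; x4]).
Proof.
move=> n12 n23 n34; rewrite negb_and => /orP[n13|n24].
  apply: (@uniq_leq_size _ [:: x1; x2; x3]).
    by rewrite /= !inE negb_or n12 n13 n23.
  by move=> y; rewrite mem_undup !inE => /or3P[]->; rewrite ?orbT.
apply: (@uniq_leq_size _ [:: x2; x3; x4]).
  by rewrite /= !inE negb_or n23 n24 n34.
by move=> y; rewrite mem_undup !inE => /or3P[]->; rewrite ?orbT.
Qed.

Lemma uniq4_neq (X : eqType) (a b c d : X) : uniq [:: a; b; c; d] ->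
  [/\ a != b, a != c & a != d] /\ [/\ b != c, b != d & c != d].
Proof. by rewrite /= !inE !negb_or => /and4P[/and3P[? ? ?] /andP[? ?] ? _]. Qed.

Lemma leq_card_bigcup (I X : finType) (A : {pred I}) (F : I -> {set X}) :
  #|\bigcup_(i in A) F i| <= \sum_(i in A) #|F i|.
Proof.
elim/big_rec2: _ => [|i n U _ IH]; first by rewrite cards0.
by rewrite (leq_trans (leq_card_setU _ _).1) ?leq_add2l.
Qed.

Lemma leq_card_in_map (X Y : finType) (A : {set X}) (B : {set Y}) (f : X -> Y) :
  {in A &, injective f} -> {in A, forall x, f x \in B} -> #|A| <= #|B|.
Proof.
move=> f_inj fAB; rewrite -(card_in_imset f_inj).
by apply/subset_leq_card/subsetP => _ /imsetP[x xA ->]; exact: fAB.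
Qed.

Section PartialStarColorings.

Variables (T : finType) (e : rel T) (k : nat).

Definition pcol := {ffun T -> option 'I_k}.

Definition pstar (f : pcol) : bool :=
  [forall x, forall y, [&& e x y, f x != None & f y != None] ==> (f x != f y)] &&
  [forall a, forall b, forall c, forall d,
     [&& uniq [:: a; b; c; d], e a b, e b c, e c d,
         f a != None, f b != None, f c != None & f d != None] ==>
     ~~ ((f a == f c) && (f b == f d))].

Lemma pstarP (f : pcol) : reflect
  ((forall x y, e x y -> f x != None -> f y != None -> f x != f y) /\
   (forall a b c d, uniq [:: a; b; c; d] -> e a b -> e b c -> e c d ->
      f a != None -> f b != None -> f c != None -> f d != None ->
      ~~ ((f a == f c) && (f b == f d))))
  (pstar f).
Proof.
apply: (iffP andP) => [[/forallP proper /forallP p4]|[proper p4]]; split.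
- by move=> x y exy fx fy; have /forallP/(_ y) := proper x; rewrite exy fx fy.
- move=> a b c d u eab ebc ecd fa fb fc fd.
  have /forallP/(_ b)/forallP/(_ c)/forallP/(_ d) := p4 a.
  by rewrite u eab ebc ecd fa fb fc fd.
- by apply/forallP=> x; apply/forallP=> y; apply/implyP=> /and3P[]; exact: proper.
- apply/forallP=> a; apply/forallP=> b; apply/forallP=> c; apply/forallP=> d.
  by apply/implyP=> /and5P[u eab ebc ecd /and4P[]]; exact: p4.
Qed.

Lemma pstar_sub (g h : pcol) :
  pstar g -> (forall x, h x != None -> h x = g x) -> pstar h.
Proof.
move=> /pstarP[proper p4] hg.
have colg x : h x != None -> g x != None by move=> hx; rewrite -(hg x hx).
apply/pstarP; split=> [x y exy hx hy|a b c d u eab ebc ecd ha hb hc hd].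
  by rewrite (hg x hx) (hg y hy); exact: proper (colg x hx) (colg y hy).
rewrite (hg a ha) (hg b hb) (hg c hc) (hg d hd).
exact: p4 (colg a ha) (colg b hb) (colg c hc) (colg d hd).
Qed.

Definition colorings (S : {set T}) : {set pcol} :=
  [set f : pcol | [forall x, (x \in S) == (f x != None)] && pstar f].

Definition ncol (S : {set T}) := #|colorings S|.

Lemma coloringsP S (f : pcol) :
  f \in colorings S -> (forall x, (x \in S) = (f x != None)) /\ pstar f.
Proof. by rewrite inE => /andP[/forallP domf fstar]; split => // x; apply/eqP. Qed.

Lemma colorings0 : [ffun => None] \in colorings set0.
Proof.
rewrite inE; apply/andP; split; first by apply/forallP => x; rewrite inE ffunE.
by apply/pstarP; split=> [x y _|a b c d _ _ _ _]; rewrite ffunE eqxx.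
Qed.

Definition uncolor (g : pcol) a : pcol := [ffun x => if x == a then None else g x].

Definition recolor (g : pcol) v c : pcol := [ffun x => if x == v then Some c else g x].

Lemma colorings_uncolor S g a : g \in colorings S -> uncolor g a \in colorings (S :\ a).
Proof.
move=> /coloringsP[domg gstar]; rewrite inE; apply/andP; split.
  apply/forallP=> x; rewrite !inE ffunE.
  by have [->|_] := eqVneq x a; rewrite ?eqxx //= domg.
by apply: (pstar_sub gstar) => x; rewrite !ffunE; case: (x =P a).
Qed.

Lemma star_colorable_total f : 0 < k -> f \in colorings setT -> star_colorable e k.
Proof.
move=> k_gt0 /coloringsP[domf /pstarP[proper p4]].
pose F := [ffun x => odflt (Ordinal k_gt0) (f x)].
have fF x : f x = Some (F x) by move: (domf x); rewrite inE ffunE; case: (f x).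
have colf x : f x != None by rewrite fF.
have neqF x y : e x y -> F x != F y.
  by move=> exy; have := proper x y exy (colf x) (colf y); rewrite !fF.
apply/existsP; exists F; apply/andP; split.
  by apply/forallP => x; apply/forallP => y; apply/implyP; exact: neqF.
apply/forallP => a; apply/forallP => b; apply/forallP => c; apply/forallP => d.
apply/implyP => /andP[u /and3P[eab ebc ecd]].
apply: undup4_ge3; rewrite ?neqF //.
by have := p4 a b c d u eab ebc ecd (colf a) (colf b) (colf c) (colf d); rewrite !fF.
Qed.

Hypotheses (e_sym : symmetric e) (e_irr : irreflexive e).

(* A bicolored 4-path through a newly colored v either has v as an end
   (v-a-b-w with g b = c and g a = g w) or as an inner vertex (a-v-b-w with
   g a = g b and g w = c); reversing the path reduces to v in the first two
   positions. *)
Lemma pstar_recolor (g : pcol) (v : T) (c : 'I_k) :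
  pstar g ->
  (forall u, e v u -> g u != Some c) ->
  (forall a b w, e v a -> e a b -> b != v -> e b w -> w != a ->
     ~~ [&& g a != None, g a == g w & g b == Some c]) ->
  (forall a b w, e v a -> e v b -> b != a -> e b w -> w != v -> w != a ->
     ~~ [&& g a != None, g a == g b & g w == Some c]) ->
  pstar (recolor g v c).
Proof.
move=> /pstarP[proper p4] clash end_path inner_path; set f := recolor g v c.
have fv : f v = Some c by rewrite ffunE eqxx.
have fE x : x != v -> f x = g x by move=> xv; rewrite ffunE (negbTE xv).
apply/pstarP; split.
  move=> x y exy fx fy.
  have [xv|xv] := eqVneq x v; have [yv|yv] := eqVneq y v.
  - by rewrite xv yv e_irr in exy.
  - by rewrite xv fv (fE y yv) eq_sym clash // -xv.
  - by rewrite yv fv (fE x xv) clash // -yv e_sym.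
  - by rewrite (fE x xv) (fE y yv) in fx fy *; exact: proper.
suff p4_head a b c' d : uniq [:: a; b; c'; d] -> e a b -> e b c' -> e c' d ->
    f a != None -> f b != None -> f c' != None -> f d != None ->
    c' != v -> d != v -> ~~ ((f a == f c') && (f b == f d)).
  move=> a b c' d u eab ebc ecd fa fb fc fd.
  have [[ab ac ad] [bc bd cd]] := uniq4_neq u.
  have reversed : b != v -> a != v -> ~~ ((f a == f c') && (f b == f d)).
    rewrite [f a == _]eq_sym [f b == _]eq_sym andbC; apply: p4_head; rewrite 1?e_sym //.
    by rewrite /= !inE !negb_or eq_sym cd eq_sym bd eq_sym ad eq_sym bc eq_sym ac eq_sym ab.
  have [cv|cv] := eqVneq c' v; first by apply: reversed; rewrite -cv.
  have [dv|dv] := eqVneq d v; first by apply: reversed; rewrite -dv.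
  exact: p4_head.
move=> u eab ebc ecd fa fb fc fd cv dv.
have [[ab ac ad] [bc bd cd]] := uniq4_neq u.
rewrite (fE c' cv) (fE d dv).
have [av|av] := eqVneq a v.
  have bv : b != v by rewrite -av eq_sym.
  rewrite av fv (fE b bv); rewrite (fE b bv) in fb.
  apply: contra (end_path b c' d _ ebc cv ecd _) => [/andP[/eqP<- ->]||].
  - by rewrite fb eqxx.
  - by rewrite -av.
  - by rewrite eq_sym.
have [bv|bv] := eqVneq b v.
  rewrite bv fv (fE a av); rewrite (fE a av) in fa.
  apply: contra (inner_path a c' d _ _ _ ecd dv _) => [/andP[-> /eqP<-]||||].
  - by rewrite fa eqxx.
  - by rewrite -bv e_sym.
  - by rewrite -bv.
  - by rewrite eq_sym.
  - by rewrite eq_sym.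
rewrite (fE a av) (fE b bv); apply: p4; rewrite -?fE //.
Qed.

Definition nbhd x := [set y | e x y].

(* Pairs (g, c): a coloring g of S together with a color c proposed for a new
   vertex. *)
Definition exts (S : {set T}) : {set pcol * 'I_k} := [set p | p.1 \in colorings S].

Definition good_exts (S : {set T}) v : {set pcol * 'I_k} :=
  [set p in exts (S :\ v) | recolor p.1 v p.2 \in colorings S].

Definition colored_exts (S : {set T}) u : {set pcol * 'I_k} :=
  [set p | (p.1 \in colorings S) && (p.1 u == Some p.2)].

Definition clash_exts (S : {set T}) v := \bigcup_(u in nbhd v) colored_exts (S :\ v) u.

Definition bicol_exts (S : {set T}) a x y : {set pcol * 'I_k} :=
  [set p | (p.1 \in colorings S) &&
     [&& p.1 a != None, p.1 a == p.1 x & p.1 y == Some p.2]].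

Definition end_exts (S : {set T}) v := \bigcup_(a in nbhd v) \bigcup_(b in nbhd a :\ v)
  \bigcup_(w in nbhd b :\ a) bicol_exts (S :\ v) a w b.

Definition inner_exts (S : {set T}) v := \bigcup_(a in nbhd v) \bigcup_(b in nbhd v :\ a)
  \bigcup_(w in nbhd b :\ v :\ a) bicol_exts (S :\ v) a b w.

Definition ncol_del (S : {set T}) a := if a \in S then ncol (S :\ a) else 0.

Lemma in_exts S p : p \in exts S -> p.1 \in colorings S.
Proof. by rewrite inE. Qed.

Lemma card_exts S : #|exts S| = ncol S * k.
Proof.
have -> : exts S = setX (colorings S) [set: 'I_k].
  by apply/setP => p; rewrite !inE andbT.
by rewrite cardsX cardsT card_ord.
Qed.

Lemma card_good_exts S v : #|good_exts S v| <= ncol S.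
Proof.
apply: (@leq_card_in_map _ _ _ _ (fun p => recolor p.1 v p.2)); last first.
  by move=> p; rewrite inE => /andP[].
move=> [g1 c1] [g2 c2] /setIdP[g1S _] /setIdP[g2S _] eq12.
have [dom1 _] := coloringsP (in_exts g1S); have [dom2 _] := coloringsP (in_exts g2S).
have gv (g : pcol) : (forall x, (x \in S :\ v) = (g x != None)) -> g v = None.
  by move=> domg; apply/eqP; rewrite -[_ == _]negbK -domg !inE eqxx.
have := congr1 (fun f : pcol => f v) eq12; rewrite /= !ffunE eqxx => -[->].
congr pair; apply/ffunP => z; have [->|zv] := eqVneq z v; first by rewrite !gv.
by have := congr1 (fun f : pcol => f z) eq12; rewrite /= !ffunE (negbTE zv).
Qed.

Lemma card_colored_exts S u : #|colored_exts S u| <= ncol S.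
Proof.
apply: (@leq_card_in_map _ _ _ _ fst); last by move=> p; rewrite inE => /andP[].
move=> [g1 c1] [g2 c2]; rewrite !inE /= => /andP[_ /eqP g1u] /andP[_ /eqP g2u] eq12.
by subst g2; move: g2u; rewrite g1u => -[->].
Qed.

(* The coloring is recovered from its restriction to S - a since a has the
   color of x, and the color from the color of y. *)
Lemma card_bicol_exts S a x y : x != a -> y != a -> #|bicol_exts S a x y| <= ncol_del S a.
Proof.
rewrite /ncol_del => xa ya; case: ifPn => aS.
  apply: (@leq_card_in_map _ _ _ _ (fun p => uncolor p.1 a)); last first.
    by move=> p; rewrite inE => /andP[gS _]; exact: colorings_uncolor.
  move=> [g1 c1] [g2 c2]; rewrite !inE /=.
  move=> /andP[_ /and3P[_ /eqP g1a /eqP g1y]] /andP[_ /and3P[_ /eqP g2a /eqP g2y]] eq12.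
  have eq_off z : z != a -> g1 z = g2 z.
    by move=> za; have := congr1 (fun f : pcol => f z) eq12; rewrite /= !ffunE (negbTE za).
  have g12 : g1 = g2.
    apply/ffunP => z; have [->|] := eqVneq z a; last exact: eq_off.
    by rewrite g1a g2a eq_off.
  by subst g2; move: g2y; rewrite g1y => -[->].
rewrite leqn0; apply/eqP/eq_card0 => p; rewrite inE; apply/negP.
by move=> /andP[/coloringsP[domg _] /andP[ga _]]; rewrite domg ga in aS.
Qed.

Lemma exts_cover (S : {set T}) v : v \in S ->
  exts (S :\ v) \subset good_exts S v :|: clash_exts S v :|: end_exts S v :|: inner_exts S v.
Proof.
move=> vS; apply/subsetP => -[g c] /in_exts /= gS; have [domg gstar] := coloringsP gS.
rewrite !in_setU; apply/contraT; rewrite !negb_or.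
case/andP=> /andP[/andP[ngood nclash] nend] ninner; case/negP: ngood.
apply/setIdP; split; first by rewrite inE.
rewrite /= inE; apply/andP; split.
  apply/forallP => x; rewrite ffunE.
  by have [->|xv] := eqVneq x v; rewrite ?vS // -domg !inE xv.
apply: pstar_recolor => //.
- move=> u evu; apply: contra nclash => guc; apply/bigcupP; exists u.
    by rewrite inE.
  by rewrite inE gS guc.
- move=> a b w eva eab bv ebw wa; apply: contra nend => bicol.
  apply/bigcupP; exists a; first by rewrite inE.
  apply/bigcupP; exists b; first by rewrite !inE bv eab.
  apply/bigcupP; exists w; first by rewrite !inE wa ebw.
  by rewrite inE gS bicol.
- move=> a b w eva evb ba ebw wv wa; apply: contra ninner => bicol.
  apply/bigcupP; exists a; first by rewrite inE.
  apply/bigcupP; exists b; first by rewrite !inE ba evb.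
  apply/bigcupP; exists w; first by rewrite !inE wa wv ebw.
  by rewrite inE gS bicol.
Qed.

Variable D : nat.
Hypothesis deg_le : forall x, deg e x <= D.

Lemma card_nbhdD1 x y : y \in nbhd x -> #|nbhd x :\ y| <= D - 1.
Proof. by move=> yx; move: (cardsD1 y (nbhd x)) (deg_le x); rewrite yx /deg /nbhd; lia. Qed.

Lemma card_bicol_walks S v (X : T -> {set T}) (Y : T -> T -> {set T}) (x y : T -> T -> T -> T) :
  (forall a, a \in nbhd v -> #|X a| <= D - 1) ->
  (forall a b, a \in nbhd v -> b \in X a -> #|Y a b| <= D - 1) ->
  (forall a b w, a \in nbhd v -> b \in X a -> w \in Y a b -> x a b w != a /\ y a b w != a) ->
  #|\bigcup_(a in nbhd v) \bigcup_(b in X a) \bigcup_(w in Y a b)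
       bicol_exts S a (x a b w) (y a b w)|
    <= (D - 1) * (D - 1) * \sum_(a in nbhd v) ncol_del S a.
Proof.
move=> cardX cardY xy_neq; apply: leq_trans (leq_card_bigcup _ _) _.
rewrite big_distrr /=; apply: leq_sum => a av.
apply: leq_trans (leq_card_bigcup _ _) _.
apply: (@leq_trans (\sum_(b in X a) ((D - 1) * ncol_del S a))); last first.
  by rewrite sum_nat_const -mulnA leq_mul2r cardX ?orbT.
apply: leq_sum => b bX; apply: leq_trans (leq_card_bigcup _ _) _.
apply: (@leq_trans (\sum_(w in Y a b) ncol_del S a)); last first.
  by rewrite sum_nat_const leq_mul2r cardY ?orbT.
by apply: leq_sum => w wY; have [] := xy_neq a b w av bX wY; exact: card_bicol_exts.
Qed.

Lemma card_clash_exts S v : #|clash_exts S v| <= D * ncol (S :\ v).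
Proof.
apply: leq_trans (leq_card_bigcup _ _) _.
apply: leq_trans (_ : _ <= \sum_(u in nbhd v) ncol (S :\ v)) _.
  by apply: leq_sum => u _; exact: card_colored_exts.
by rewrite sum_nat_const leq_mul2r deg_le orbT.
Qed.

Lemma card_end_exts S v :
  #|end_exts S v| <= (D - 1) * (D - 1) * \sum_(a in nbhd v) ncol_del (S :\ v) a.
Proof.
apply: card_bicol_walks => [a av|a b av|a b w av].
- by apply: card_nbhdD1; move: av; rewrite !inE e_sym.
- by rewrite !inE => /andP[_ eab]; apply: card_nbhdD1; rewrite inE e_sym.
rewrite !inE => /andP[_ eab] /andP[wa _]; split=> //.
by apply: contraTneq eab => ->; rewrite e_irr.
Qed.

Lemma card_inner_exts S v :
  #|inner_exts S v| <= (D - 1) * (D - 1) * \sum_(a in nbhd v) ncol_del (S :\ v) a.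
Proof.
apply: card_bicol_walks => [a av|a b av|a b w av]; first exact: card_nbhdD1.
  rewrite !inE => /andP[_ evb]; apply: leq_trans (subset_leq_card (subD1set _ _)) _.
  by apply: card_nbhdD1; rewrite inE e_sym.
by rewrite !inE => /andP[ba _] /and3P[wa _ _].
Qed.

Lemma ncol_exts_count (S : {set T}) v : v \in S ->
  ncol (S :\ v) * k <= ncol S + D * ncol (S :\ v) +
     2 * ((D - 1) * (D - 1) * \sum_(a in nbhd v) ncol_del (S :\ v) a).
Proof.
move=> vS; rewrite -card_exts; apply: leq_trans (subset_leq_card (exts_cover vS)) _.
have := card_good_exts S v; have := card_clash_exts S v.
have := card_end_exts S v; have := card_inner_exts S v.
have [+ _] := leq_card_setU (good_exts S v :|: clash_exts S v :|: end_exts S v) (inner_exts S v).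
have [+ _] := leq_card_setU (good_exts S v :|: clash_exts S v) (end_exts S v).
have [+ _] := leq_card_setU (good_exts S v) (clash_exts S v).
lia.
Qed.

Section Growth.

Local Open Scope ring_scope.

Variables (R : realFieldType) (b : R).
Hypotheses (b_gt0 : 0 < b)
  (k_large : (2 * D * (D - 1) * (D - 1))%:R + b ^+ 2 + b * D%:R <= b * k%:R).

Lemma ncol_grow (S : {set T}) v : v \in S -> b * (ncol (S :\ v))%:R <= (ncol S)%:R.
Proof.
move: {2}#|S| (leqnn #|S|) => n; elim: n S v => [|n IH] S v Sn vS.
  by move: Sn; rewrite leqn0 cards_eq0 => /eqP S0; rewrite S0 inE in vS.
set S' := S :\ v.
have S'n : (#|S'| <= n)%N by move: (cardsD1 v S) Sn; rewrite vS /S'; lia.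
have del_le a : b * (ncol_del S' a)%:R <= (ncol S')%:R.
  by rewrite /ncol_del; case: ifP => aS'; [exact: IH | rewrite mulr0 ler0n].
have sum_le : b * (\sum_(a in nbhd v) ncol_del S' a)%:R <= (D * ncol S')%:R.
  rewrite natr_sum mulr_sumr; apply: le_trans (ler_sum _ (fun a _ => del_le a)) _.
  by rewrite sumr_const -mulrnA ler_nat mulnC leq_mul2r deg_le orbT.
have := ncol_exts_count vS; rewrite -(ler_nat R) !natrD !natrM -/S' => count.
have := k_large; rewrite !natrM => large.
have c'_ge0 : 0 <= (ncol S')%:R :> R by rewrite ler0n.
have d1_ge0 : 0 <= (D - 1)%:R :> R by rewrite ler0n.
have := ler_wpM2l (ltW b_gt0) count.
have := ler_wpM2l (mulr_ge0 (mulr_ge0 (ler0n _ 2) d1_ge0) d1_ge0) sum_le.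
have := ler_wpM2l c'_ge0 large; rewrite natrM.
move=> ? ? ?; have : b * (b * (ncol S')%:R) <= b * (ncol S)%:R by nra.
by rewrite ler_pM2l.
Qed.

Lemma ncol_gt0 (S : {set T}) : (0 < ncol S)%N.
Proof.
move: {2}#|S| (leqnn #|S|) => n; elim: n S => [|n IH] S Sn.
  move: Sn; rewrite leqn0 cards_eq0 => /eqP->.
  by apply/card_gt0P; exists [ffun => None]; exact: colorings0.
have [->|[v vS]] := set_0Vmem S; first by apply: IH; rewrite cards0.
have : (0 < ncol (S :\ v))%N by apply: IH; move: (cardsD1 v S) Sn; rewrite vS; lia.
rewrite -(ltr0n R) -(ltr_pM2l b_gt0) mulr0 => /lt_le_trans/(_ (ncol_grow vS)).
by rewrite ltr0n.
Qed.

Lemma star_colorable_budget : star_colorable e k.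
Proof.
have k_gt0 : (0 < k)%N.
  rewrite lt0n; apply: contraTneq k_large => ->; rewrite mulr0 -ltNge.
  apply: lt_le_trans (exprn_gt0 2 b_gt0) _; rewrite addrAC lerDr.
  by rewrite addr_ge0 ?mulr_ge0 ?ler0n ?ltW.
have /card_gt0P[f fT] := ncol_gt0 setT.
exact: star_colorable_total k_gt0 fT.
Qed.

End Growth.

End PartialStarColorings.

Lemma leq_star_chromatic (T : finType) (e : rel T) k :
  star_colorable e k -> star_chromatic e <= k.
Proof. by move=> ek; rewrite /star_chromatic; case: ex_minnP => m _; apply; rewrite ek. Qed.

Lemma leq_deg_max_degree (T : finType) (e : rel T) x : deg e x <= max_degree e.
Proof. exact: (leq_bigmax (F := fun x => deg e x)). Qed.

Local Open Scope ring_scope.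

Lemma nat_floor (R : realDomainType) (x : R) n :
  0 <= x -> x <= n%:R -> exists k : nat, k%:R <= x < k.+1%:R.
Proof.
elim: n => [|n IH] x_ge0 xn; first by exists 0%N; rewrite x_ge0 (le_lt_trans xn) ?ltr01.
have [|nx] := leP x n%:R; first exact: IH.
have [xn1|] := ltP x n.+1%:R; first by exists n; rewrite ltW.
by move=> n1x; exists n.+1; rewrite n1x (le_lt_trans xn) // ltr_nat.
Qed.

Lemma sqrt_2n_le (R : realFieldType) (n : nat) (t : R) :
  (1 <= n)%N -> 0 <= t -> t ^+ 2 = 2 * n%:R -> t <= 4 * n%:R - 2.
Proof. by rewrite -(ler_nat R) => n_ge1 t_ge0 t2; nra. Qed.

Lemma sqrt_budget (R : realFieldType) (D k : nat) (t : R) :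
  (1 <= D)%N -> 0 <= t -> t ^+ 2 = 2 * D%:R ->
  2 * (D%:R * t) + D%:R - 1 <= k%:R ->
  (2 * D * (D - 1) * (D - 1))%:R + (D%:R * t) ^+ 2 + D%:R * t * D%:R
    <= D%:R * t * k%:R.
Proof.
move=> D_ge1 t_ge0 t2 k_ge; have t_le := sqrt_2n_le D_ge1 t_ge0 t2.
have D_ge0 : 0 <= D%:R :> R by rewrite ler0n.
have := ler_wpM2l D_ge0 t_le; have := ler_wpM2l (mulr_ge0 D_ge0 t_ge0) k_ge.
rewrite !natrM natrB // exprMn t2; nra.
Qed.

Unset Implicit Arguments.

Theorem corollary11 (R : rcfType) (T : finType) (e : rel T) :
  simple_graph e -> (1 <= max_degree e)%N ->
  (star_chromatic e)%:R <=
    2 * Num.sqrt (2 : R) * ((max_degree e)%:R * Num.sqrt ((max_degree e)%:R))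
    + (max_degree e)%:R.
Proof.
move=> [e_sym e_irr] D_ge1; set D := max_degree e.
have D_gt0 : 0 < D%:R :> R by rewrite ltr0n.
set t : R := Num.sqrt (2 * D%:R).
have t_gt0 : 0 < t by rewrite sqrtr_gt0 mulr_gt0.
have t2 : t ^+ 2 = 2 * D%:R by rewrite sqr_sqrtr ?mulr_ge0 ?ltW.
have -> : 2 * Num.sqrt 2 * (D%:R * Num.sqrt D%:R) = 2 * (D%:R * t).
  by rewrite /t sqrtrM ?ler0n //; ring.
have [k /andP[kX Xk]] : exists k : nat, k%:R <= 2 * (D%:R * t) + D%:R < k.+1%:R.
  apply: (@nat_floor _ _ (8 * D * D)); first by rewrite addr_ge0 ?mulr_ge0 ?ltW.
  have := ler_wpM2l (ltW D_gt0) (sqrt_2n_le D_ge1 (ltW t_gt0) t2).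
  by rewrite -(ler_nat R) in D_ge1; rewrite !natrM; nra.
apply: le_trans kX; rewrite ler_nat; apply: leq_star_chromatic.
apply: (star_colorable_budget e_sym e_irr (leq_deg_max_degree e) (mulr_gt0 D_gt0 t_gt0)).
by apply: sqrt_budget => //; [exact: ltW | rewrite -natr1 in Xk; lra].
Qed.
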